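(* Let $n\ge 0$ and let $(K,w_K)$ and $(H,w_H)$ be $(n+1)$-dimensional weighted simplicial complexes such that $(H,w_H)$ is a subcomplex of $(K,w_K)$ and their proper difference $(L,w_L)$ exists, i.e. $L=K$ as simplicial complexes, $w_L=w_K-w_H$ (with $w_H$ extended by $0$ to faces of $K$ not in $H$), and $\{F\in K : w_L(F)>0\}$ is a simplicial complex. Let $N=|S_n(K)|=\dim C^n(K,\mathbb{R})$ and let $\lambda_1\le\lambda_2\le\dots\le\lambda_N$ and $\theta_1\le\theta_2\le\dots\le\theta_N$ be the eigenvalues of $\mathcal{L}^{up}_n(K,w_K)$ and $\mathcal{L}^{up}_n(L,w_L)$, respectively. Put $D_{\mathcal{W}}=\dim C^{n+1}(H,\mathbb{R})-\dim H^{n+1}(H,\mathbb{R})$ and $D_H=\dim C^n(H,\mathbb{R})$, and use the convention $\lambda_j=0$ for $j\le 0$. Then $$\theta_k\le\lambda_{k+D_H}\quad\text{for all } k=1,\dots,N-D_H,$$ and $$\lambda_{k-D_{\mathcal{W}}}\le\theta_k\quad\text{for all } k=1,\dots,N.$$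
   Context: A finite abstract simplicial complex $K$ is a family of finite subsets of a vertex set closed under taking subsets; $S_j(K)$ is its set of $j$-faces (faces with $j+1$ vertices). An oriented simplex $[F]$ is a face with an ordering of its vertices, two orderings giving the same orientation iff they differ by an even permutation. $C^j(K,\mathbb{R})$ is the real vector space of functions $f$ on oriented $j$-faces with $f$ changing sign when the orientation is reversed; it has the basis of elementary cochains $e_{[F]}$, $F\in S_j(K)$. The coboundary $\delta_j:C^j\to C^{j+1}$ is $(\delta_j f)([v_0,\dots,v_{j+1}])=\sum_{i=0}^{j+1}(-1)^i f([v_0,\dots,\hat v_i,\dots,v_{j+1}])$. For an oriented $(j+1)$-face $[\bar F]=[v_0,\dots,v_{j+1}]$ and $[F_i]=[v_0,\dots,\hat v_i,\dots,v_{j+1}]$, $\mathrm{sgn}([F_i],\partial[\bar F])=(-1)^i$ (and the sign changes if the orientation of $F_i$ is reversed). A weight function is $w:\bigcup_j S_j(K)\to[0,\infty)$; $(K,w)$ is a weighted simplicial complex if $w>0$ everywhere and a degenerate weighted simplicial complex if zero values are allowed. The weights define $(f,g)=\sum_{F\in S_j(K)}w(F)f([F])g([F])$ on $C^j(K,\mathbb{R})$. The (formal) adjoint $\delta_j^*:C^{j+1}\to C^j$ is $(\delta_j^*\bar f)([F])=\sum_{\bar F\in S_{j+1}(K),\,F\subset\bar F}\frac{w(\bar F)}{w(F)}\mathrm{sgn}([F],\partial[\bar F])\bar f([\bar F])$ if $w(F)\ne 0$ and $0$ if $w(F)=0$. The $n$-th up-Laplacian is $\mathcal{L}^{up}_n(K,w)=\delta_n^*\delta_n:C^n(K,\mathbb{R})\to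 C^n(K,\mathbb{R})$; its eigenvalues are real and listed with multiplicity. A weighted complex $(H,w_H)$ is a subcomplex of $(K,w_K)$ if $H$ is a subcomplex of $K$ and $w_H(F)\le w_K(F)$ for all faces $F$ of $H$. $H^{n+1}(H,\mathbb{R})$ is the simplicial cohomology of $H$ with real coefficients. *)

From HB Require Import structures.
From mathcomp Require Import all_boot all_order all_algebra.
From mathcomp Require Import reals.
Set Implicit Arguments. Unset Strict Implicit. Unset Printing Implicit Defensive.
Import Order.TTheory GRing.Theory Num.Theory.
Local Open Scope ring_scope.

(* Vertices are 'I_V (a finite vertex set), a face is a {set 'I_V},
   a complex is a {set {set 'I_V}}. Each face is oriented by the
   increasing order of its vertices. *)

Definition is_complex (V : nat) (K : {set {set 'I_V}}) : Prop :=
  forall F G : {set 'I_V}, F \in K -> G \subset F -> G \in K.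

Definition has_dim (V : nat) (K : {set {set 'I_V}}) (d : nat) : Prop :=
  (exists2 F, F \in K & #|F| = d.+1) /\ (forall F, F \in K -> (#|F| <= d.+1)%N).

Definition faces (V : nat) (K : {set {set 'I_V}}) (j : nat) : {set {set 'I_V}} :=
  [set F in K | #|F| == j.+1].

(* sgn([F], d[Fbar]) for increasingly oriented faces: (-1)^i where i is
   the position (from 0) in Fbar of the vertex removed; 0 if F is not a
   facet of Fbar. *)
Definition sgn (R : pzRingType) (V : nat) (F Fbar : {set 'I_V}) : R :=
  if (F \subset Fbar) && (#|Fbar| == #|F|.+1) then
    \sum_(v in Fbar :\: F) (-1) ^+ #|[set u in F | (nat_of_ord u < nat_of_ord v)%N]|
  else 0.

(* Matrix of the coboundary delta_j : C^j(K) -> C^{j+1}(K) in the bases of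
   elementary cochains (acting on column vectors). *)
Definition cob (R : pzRingType) (V : nat) (K : {set {set 'I_V}}) (j : nat)
  : 'M[R]_(#|faces K j.+1|, #|faces K j|) :=
  \matrix_(i < #|faces K j.+1|, k < #|faces K j|)
     sgn R (enum_val k) (enum_val i).

(* Matrix of the (formal) adjoint delta_j^* : C^{j+1}(K) -> C^j(K). *)
Definition adj (R : fieldType) (V : nat) (K : {set {set 'I_V}})
  (w : {set 'I_V} -> R) (j : nat) : 'M[R]_(#|faces K j|, #|faces K j.+1|) :=
  \matrix_(k < #|faces K j|, i < #|faces K j.+1|)
     (if w (enum_val k) == 0 then 0
      else w (enum_val i) / w (enum_val k) * sgn R (enum_val k) (enum_val i)).

Definition Lup (R : fieldType) (V : nat) (K : {set {set 'I_V}})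
  (w : {set 'I_V} -> R) (n : nat) : 'M[R]_(#|faces K n|) :=
  adj K w n *m cob R K n.

Definition coh_dim (R : fieldType) (V : nat) (K : {set {set 'I_V}}) (j : nat) : nat :=
  (#|faces K j| - \rank (cob R K j)
   - (if j is j'.+1 then \rank (cob R K j') else 0))%N.

(* 1-based access to a sorted eigenvalue list, with value 0 at index 0
   (convention lambda_j = 0 for j <= 0). *)
Definition ev (R : pzRingType) (s : seq R) (k : nat) : R :=
  if k is k'.+1 then nth 0 s k' else 0.

From HB Require Import structures.
From mathcomp Require Import all_boot all_order all_algebra.
From mathcomp Require Import reals.
From mathcomp Require Import ring lra zify.
Set Implicit Arguments. Unset Strict Implicit. Unset Printing Implicit Defensive.
Import Order.TTheory GRing.Theory Num.Theory.
Local Open Scope ring_scope.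

(* Both up-Laplacians are self-adjoint for weighted inner products on C^n(K):
   L^up(K, w_K) for the weights w_K, and L^up(L, w_L) for w_L (with w_K put in
   where w_L vanishes); their quadratic forms are the energies
   x |-> sum_Fbar w(Fbar) (delta x)(Fbar)^2.  By Courant-Fischer, if on a
   subspace of codimension d every Rayleigh bound for one operator implies the
   same bound for the other, the spectrum of the other lies below the first one
   shifted by d.  For the upper bound take the cochains vanishing on S_n(H)
   (codimension D_H): there the norms agree and the w_L-energy is at most the
   w_K-energy.  For the lower bound take the cochains whose coboundary vanishes
   on S_{n+1}(H): there the energies agree and the w_L-norm is at most the
   w_K-norm; as H has no (n+2)-faces, this subspace has codimension at most
   rank delta_n^H = D_W.
   Courant-Fischer itself comes from splitting the space into the kernels of
   prod_{lambda_i <= c} (G - lambda_i) and prod_{lambda_i > c} (G - lambda_i),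
   on which the Rayleigh quotient is <= c, resp. > c. *)

Lemma char_poly_stable_split (F : fieldType) N m1 m2 (A : 'M[F]_N)
    (V1 : 'M_(m1, N)) (V2 : 'M_(m2, N)) (A1 : 'M_m1) (A2 : 'M_m2) :
  (m1 + m2 = N)%N -> \rank (col_mx V1 V2) = N ->
  V1 *m A = A1 *m V1 -> V2 *m A = A2 *m V2 ->
  char_poly A = char_poly A1 * char_poly A2.
Proof.
move=> eN; case: N / eN in A V1 V2 * => rankV AV1 AV2; set V := col_mx V1 V2.
have V_unit : V \in unitmx by rewrite -row_free_unit /row_free rankV.
have VA : V *m A = block_mx A1 0 0 A2 *m V.
  by rewrite mul_col_mx mul_block_col !mul0mx addr0 add0r AV1 AV2.
set Vp := map_mx (@polyC F) V.
have VpA : Vp *m char_poly_mx A = char_poly_mx (block_mx A1 0 0 A2) *m Vp.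
  rewrite /char_poly_mx mulmxBr mulmxBl scalar_mxC; congr (_ - _).
  by rewrite /Vp -!map_mxM VA.
have := congr1 determinant VpA; rewrite !det_mulmx /Vp det_map_mx /=.
rewrite char_block_diag_mx det_ublock -/(char_poly A) -/(char_poly A1) -/(char_poly A2).
rewrite [_ * (\det V)%:P]mulrC; apply: mulfI.
by rewrite polyC_eq0 -unitfE -unitmxE.
Qed.

Lemma restrictmx_eigenvector (F : fieldType) n m (A : 'M[F]_n) (W : 'M_(m, n)) a :
  stablemx W A -> root (char_poly (restrictmx W A)) a ->
  exists2 x : 'rV_n, (x <= W)%MS & x != 0 /\ x *m A = a *: x.
Proof.
move=> WA; rewrite -eigenvalue_root_char => /eigenvalueP [u uA u0].
have eA : restrictmx W A *m row_base W = row_base W *m A.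
  by rewrite mulmxKpV // stablemx_row_base.
exists (u *m row_base W); first by rewrite (submx_trans (submxMl _ _)) ?eq_row_base.
split; first by rewrite mulmx_free_eq0 ?row_base_free.
by rewrite -mulmxA -eA mulmxA uA scalemxAl.
Qed.

Lemma char_poly_tr (R : comNzRingType) n (A : 'M[R]_n) : char_poly A^T = char_poly A.
Proof.
rewrite /char_poly -[in RHS]det_tr; congr (\det _).
by rewrite /char_poly_mx linearB /= tr_scalar_mx map_trmx.
Qed.

Definition poly_of_roots (R : nzRingType) (rs : seq R) : {poly R} :=
  \prod_(r <- rs) ('X - r%:P).

Lemma coprimep_poly_of_roots (F : fieldType) (p : {poly F}) rs :
  {in rs, forall r, ~~ root p r} -> coprimep p (poly_of_roots rs).
Proof.
elim: rs => [|r rs IH] prs; first by rewrite /poly_of_roots big_nil coprimep1.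
rewrite /poly_of_roots big_cons coprimepMr coprimep_XsubC prs ?mem_head //=.
by apply: IH => u urs; apply: prs; rewrite in_cons urs orbT.
Qed.

Definition bform (R : pzRingType) n (D : 'M[R]_n) (x y : 'rV[R]_n) : R :=
  (x *m D *m y^T) 0 0.

Lemma bformDl (R : pzRingType) n (D : 'M[R]_n) x y z :
  bform D (x + y) z = bform D x z + bform D y z.
Proof. by rewrite /bform !mulmxDl mxE. Qed.

Lemma bformZl (R : pzRingType) n (D : 'M[R]_n) a x z :
  bform D (a *: x) z = a * bform D x z.
Proof. by rewrite /bform -!scalemxAl mxE. Qed.

Lemma bform0l (R : pzRingType) n (D : 'M[R]_n) z : bform D 0 z = 0.
Proof. by rewrite /bform !mul0mx mxE. Qed.

Lemma bform_mulmx (R : pzRingType) n (D G : 'M[R]_n) x y :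
  bform D (x *m G) y = bform (G *m D) x y.
Proof. by rewrite /bform mulmxA. Qed.

Lemma bform_diag (R : comPzRingType) n (e y : 'rV[R]_n) :
  bform (diag_mx e) y y = \sum_i e 0 i * y 0 i ^+ 2.
Proof. by rewrite /bform mxE; apply: eq_bigr => i _; rewrite mul_mx_diag !mxE; ring. Qed.

Definition selfadjoint (R : numDomainType) n (D G : 'M[R]_n) :=
  [/\ D^T = D, forall x, x != 0 -> 0 < bform D x x & (G *m D)^T = G *m D].

Lemma diag_posdef (R : realDomainType) n (e x : 'rV[R]_n) :
  (forall i, 0 < e 0 i) -> x != 0 -> 0 < bform (diag_mx e) x x.
Proof.
move=> e_gt0 x0; rewrite bform_diag.
have [i xi0] : exists i, x 0 i != 0.
  apply/existsP; move: x0; apply: contraR; rewrite negb_exists => /forallP x0.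
  by apply/eqP/rowP => i; rewrite mxE; apply/eqP; rewrite -[_ == _]negbK x0.
rewrite (bigD1 i) //= ltr_wpDr //.
  by apply: sumr_ge0 => j _; rewrite mulr_ge0 ?sqr_ge0 ?ltW.
by rewrite mulr_gt0 ?e_gt0 // lt0r sqrf_eq0 xi0 sqr_ge0.
Qed.

Section SelfAdjoint.
Variables (R : realFieldType) (n : nat) (D G : 'M[R]_n.+1).
Hypothesis GD : selfadjoint D G.
Local Notation "''[' x , y ]" := (bform D x y) : ring_scope.

Lemma bformC x y : '[x, y] = '[y, x].
Proof.
have [D_sym _ _] := GD; rewrite /bform.
have -> : x *m D *m y^T = (y *m D *m x^T)^T by rewrite !trmx_mul trmxK D_sym mulmxA.
by rewrite mxE.
Qed.

Lemma bformDr x y z : '[z, x + y] = '[z, x] + '[z, y].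
Proof. by rewrite bformC bformDl ![bform D _ z]bformC. Qed.

Lemma bformZr a x z : '[z, a *: x] = a * '[z, x].
Proof. by rewrite bformC bformZl bformC. Qed.

Lemma bform0r z : '[z, 0] = 0.
Proof. by rewrite bformC bform0l. Qed.

Lemma bform_ge0 x : 0 <= '[x, x].
Proof.
have [_ D_pos _] := GD.
by have [->|/D_pos/ltW//] := eqVneq x 0; rewrite bform0l.
Qed.

Lemma bform_eq0 x : '[x, x] = 0 -> x = 0.
Proof.
have [_ D_pos _] := GD.
by have [//|/D_pos] := eqVneq x 0; rewrite lt0r => /andP[/eqP].
Qed.

Lemma bform_mulG x y : '[x *m G, y] = '[x, y *m G].
Proof.
have [D_sym _ GD_sym] := GD.
have DGt : D *m G^T = G *m D by rewrite -GD_sym trmx_mul D_sym.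
by rewrite /bform trmx_mul mulmxA -(mulmxA x D) DGt mulmxA.
Qed.

Lemma bform_horner p x y :
  '[x *m horner_mx G p, y] = '[x, y *m horner_mx G p].
Proof.
elim/poly_ind: p x y => [|p c IH] x y.
  by rewrite rmorph0 !mulmx0 bform0l bform0r.
rewrite rmorphD rmorphM /= horner_mx_X horner_mx_C !mulmxDr !mulmxA.
rewrite bformDl bformDr !mul_mx_scalar bformZl bformZr; congr (_ + _).
have GpG : G *m horner_mx G p = horner_mx G p *m G by apply: comm_mx_horner.
by rewrite bform_mulG IH -!mulmxA GpG.
Qed.

Lemma horner_mx_eigen (p : {poly R}) (x : 'rV_n.+1) t :
  x *m G = t *: x -> x *m horner_mx G p = p.[t] *: x.
Proof.
move=> xG; elim/poly_ind: p => [|p c IH].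
  by rewrite rmorph0 mulmx0 horner0 scale0r.
rewrite rmorphD rmorphM /= horner_mx_X horner_mx_C mulmxDr mulmxA IH -scalemxAl xG.
by rewrite mul_mx_scalar hornerMXaddC scalerDl scalerA.
Qed.

Lemma mulmx_hornerM (x : 'rV_n.+1) p q :
  x *m horner_mx G (p * q) = x *m horner_mx G p *m horner_mx G q.
Proof. by rewrite rmorphM mulmxA. Qed.

Local Notation ker rs x := (x *m horner_mx G (poly_of_roots rs) = 0).

(* Self-adjointness rules out Jordan blocks: if (G - t)^2 y = 0, then
   '[(G - t) y, (G - t) y] = '[y, (G - t)^2 y] = 0. *)
Lemma ker_root_dup t rs (x : 'rV_n.+1) : t \in rs -> ker (t :: rs) x -> ker rs x.
Proof.
move=> trs xker; set Q := poly_of_roots (rem t rs); pose Xt := 'X - t%:P.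
have rsQ : poly_of_roots rs = Xt * Q.
  by rewrite /poly_of_roots (perm_big _ (perm_to_rem trs)) big_cons.
have trsQ : poly_of_roots (t :: rs) = Q * Xt * Xt.
  by rewrite /poly_of_roots big_cons -/(poly_of_roots rs) rsQ /Xt; ring.
set z := x *m horner_mx G (Q * Xt).
have zXt : z *m horner_mx G Xt = 0 by rewrite /z -mulmx_hornerM -trsQ.
have /bform_eq0 z0 : '[z, z] = 0.
  by rewrite {1}/z mulmx_hornerM bform_horner -/z zXt bform0r.
by rewrite rsQ mulrC; exact: z0.
Qed.

Lemma ker_root_split t rs (x : 'rV_n.+1) : t \notin rs -> ker (t :: rs) x ->
  exists x1 x2, [/\ x = x1 + x2, ker rs x1, x2 *m G = t *: x2 & '[x1, x2] = 0].
Proof.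
move=> trs xker; set Q := poly_of_roots rs; pose Xt := 'X - t%:P.
have Qt0 : Q.[t] != 0 by apply: contra trs; rewrite -root_prod_XsubC.
have [S QS] : exists S, Q - Q.[t]%:P = S * Xt.
  by apply/factor_theorem; rewrite /root hornerD hornerN hornerC subrr.
have tQ : poly_of_roots (t :: rs) = Xt * Q by rewrite /poly_of_roots big_cons.
have ker_mul p : x *m horner_mx G (poly_of_roots (t :: rs) * p) = 0.
  by rewrite mulmx_hornerM xker mul0mx.
(* Bezout: e1 + e2 = 1 with e1 a multiple of Xt and e2 a multiple of Q. *)
pose e1 := - (Q.[t]^-1%:P * S * Xt); pose e2 := Q.[t]^-1%:P * Q.
have e12 : e1 + e2 = 1.
  have -> : e1 + e2 = Q.[t]^-1%:P * (Q - S * Xt) by rewrite /e1 /e2; ring.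
  by rewrite -QS opprB addrC subrK -polyCM mulVf.
have x1ker : ker rs (x *m horner_mx G e1).
  rewrite -mulmx_hornerM.
  have -> : e1 * Q = poly_of_roots (t :: rs) * - (Q.[t]^-1%:P * S).
    by rewrite tQ /e1; ring.
  exact: ker_mul.
have x2eig : x *m horner_mx G e2 *m G = t *: (x *m horner_mx G e2).
  apply/eqP; rewrite -subr_eq0 -mul_mx_scalar -mulmxBr.
  have -> : G - t%:M = horner_mx G Xt by rewrite rmorphB /= horner_mx_X horner_mx_C.
  rewrite -mulmx_hornerM.
  have -> : e2 * Xt = poly_of_roots (t :: rs) * Q.[t]^-1%:P by rewrite tQ /e2; ring.
  by rewrite ker_mul.
exists (x *m horner_mx G e1), (x *m horner_mx G e2); split => //.
  by rewrite -mulmxDr -rmorphD /= e12 rmorph1 mulmx1.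
have := bform_horner Q (x *m horner_mx G e1) (x *m horner_mx G e2).
rewrite x1ker bform0l (horner_mx_eigen _ x2eig) bformZr => /esym/eqP.
by rewrite mulf_eq0 (negPf Qt0) => /eqP.
Qed.

Lemma rayleigh_ker_bound s m rs (x : 'rV_n.+1) :
  all (fun r => 0 <= s * (r - m)) rs -> ker rs x ->
  0 <= s * ('[x *m G, x] - m * '[x, x]).
Proof.
elim: rs x => [|t rs IH] x /=.
  move=> _; rewrite /poly_of_roots big_nil rmorph1 mulmx1 => ->.
  by rewrite mul0mx bform0l mulr0 subrr mulr0.
move=> /andP[st srs] xker; have [trs|trs] := boolP (t \in rs).
  by apply: IH => //; apply: ker_root_dup xker.
have [x1 [x2 [-> x1ker x2eig x12]]] := ker_root_split trs xker.
have x21 : '[x2, x1] = 0 by rewrite bformC.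
have x1G2 : '[x1 *m G, x2] = 0 by rewrite bform_mulG x2eig bformZr x12 mulr0.
rewrite mulmxDl !bformDl !bformDr x2eig !bformZl x1G2 x12 x21.
have := IH x1 srs x1ker; have := bform_ge0 x2; nra.
Qed.

Variable lam : seq R.
Hypothesis charG : char_poly G = poly_of_roots lam.

Section Threshold.
Variable c : R.
Let lam_le := [seq r <- lam | r <= c].
Let lam_gt := [seq r <- lam | ~~ (r <= c)].
Let Wle := kermxpoly G (poly_of_roots lam_le).
Let Wgt := kermxpoly G (poly_of_roots lam_gt).

Lemma poly_of_roots_split : poly_of_roots lam = poly_of_roots lam_le * poly_of_roots lam_gt.
Proof.
by rewrite /poly_of_roots -big_cat; apply: perm_big; rewrite perm_sym perm_filterC.
Qed.

Lemma coprimep_le_gt : coprimep (poly_of_roots lam_le) (poly_of_roots lam_gt).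
Proof.
apply: coprimep_poly_of_roots => r; rewrite root_prod_XsubC !mem_filter.
by case: (r <= c).
Qed.

Lemma rayleigh_Wle x : (x <= Wle)%MS -> '[x *m G, x] <= c * '[x, x].
Proof.
rewrite sub_kermx => /eqP xker.
have := @rayleigh_ker_bound (-1) c lam_le x; rewrite mulN1r oppr_ge0 subr_le0.
apply=> //; apply/allP => r; rewrite mem_filter => /andP[rc _].
by rewrite mulN1r oppr_ge0 subr_le0.
Qed.

Lemma rayleigh_Wgt x : (x <= Wgt)%MS -> x != 0 -> c * '[x, x] < '[x *m G, x].
Proof.
rewrite sub_kermx => /eqP xker x0.
have [m cm mlam] : exists2 m, c < m & all (fun r => m <= r) lam_gt.
  have : all (fun r => c < r) lam_gt.
    by apply/allP => r; rewrite mem_filter -ltNge => /andP[].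
  elim: lam_gt => [|r s IH] /=; first by exists (c + 1); rewrite ?ltrDl.
  case/andP=> cr /IH [m cm ms]; exists (Num.min r m); first by rewrite lt_min cr.
  rewrite ge_min lexx /=; apply/allP => u us.
  by rewrite ge_min (allP ms u us) orbT.
have mle : m * '[x, x] <= '[x *m G, x].
  have := @rayleigh_ker_bound 1 m lam_gt x; rewrite mul1r subr_ge0; apply=> //.
  by apply/allP => r /(allP mlam); rewrite mul1r subr_ge0.
have [_ D_pos _] := GD.
by apply: lt_le_trans mle; rewrite ltr_pM2r ?D_pos.
Qed.

Lemma stable_kermxpoly p : stablemx (kermxpoly G p) G.
Proof. exact: comm_mx_stable_kermxpoly. Qed.

Lemma restrict_Wle_root r : root (char_poly (restrictmx Wle G)) r -> r <= c.
Proof.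
move=> /(restrictmx_eigenvector (stable_kermxpoly _)) [x xW [x0 xG]].
have [_ D_pos _] := GD.
by have := rayleigh_Wle xW; rewrite xG bformZl ler_pM2r ?D_pos.
Qed.

Lemma restrict_Wgt_root r : root (char_poly (restrictmx Wgt G)) r -> c < r.
Proof.
move=> /(restrictmx_eigenvector (stable_kermxpoly _)) [x xW [x0 xG]].
have [_ D_pos _] := GD.
by have := rayleigh_Wgt xW x0; rewrite xG bformZl ltr_pM2r ?D_pos.
Qed.

Lemma rank_Wle_Wgt_sum : \rank (Wle + Wgt)%MS = n.+1.
Proof.
rewrite -(kermxpolyM G coprimep_le_gt) -poly_of_roots_split -charG.
by rewrite /kermxpoly Cayley_Hamilton mxrank_ker mxrank0 subn0.
Qed.

Lemma rank_Wle_Wgt : (\rank Wle + \rank Wgt)%N = n.+1.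
Proof.
have cap0 : (Wle :&: Wgt)%MS = 0 by apply: mxdirect_kermxpoly coprimep_le_gt.
by rewrite -mxrank_sum_cap cap0 mxrank0 addn0 rank_Wle_Wgt_sum.
Qed.

Lemma rank_Wle : \rank Wle = size lam_le.
Proof.
set A1 := restrictmx Wle G; set A2 := restrictmx Wgt G.
have GA1 : row_base Wle *m G = A1 *m row_base Wle.
  by rewrite mulmxKpV // stablemx_row_base stable_kermxpoly.
have GA2 : row_base Wgt *m G = A2 *m row_base Wgt.
  by rewrite mulmxKpV // stablemx_row_base stable_kermxpoly.
have charA : char_poly A1 * char_poly A2 = poly_of_roots lam_le * poly_of_roots lam_gt.
  rewrite -poly_of_roots_split -charG; symmetry.
  apply: char_poly_stable_split GA1 GA2; first exact: rank_Wle_Wgt.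
  by rewrite -addsmxE (adds_eqmx (eq_row_base _) (eq_row_base _)) rank_Wle_Wgt_sum.
have A1_dvd : char_poly A1 %| poly_of_roots lam_le.
  have cp : coprimep (char_poly A1) (poly_of_roots lam_gt).
    apply: coprimep_poly_of_roots => r; rewrite mem_filter => /andP[rc _].
    by apply: contra rc => /restrict_Wle_root.
  by rewrite -(Gauss_dvdpl _ cp) -charA dvdp_mulIl.
have A2_dvd : char_poly A2 %| poly_of_roots lam_gt.
  have cp : coprimep (char_poly A2) (poly_of_roots lam_le).
    apply: coprimep_poly_of_roots => r; rewrite mem_filter => /andP[rc _].
    by apply/negP => /restrict_Wgt_root; rewrite ltNge rc.
  by rewrite -(Gauss_dvdpr _ cp) -charA dvdp_mulIr.
have := dvdp_leq (monic_neq0 (monic_prod_XsubC _ _ _)) A1_dvd.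
have := dvdp_leq (monic_neq0 (monic_prod_XsubC _ _ _)) A2_dvd.
rewrite !size_char_poly !size_prod_XsubC !ltnS.
have : (size lam_le + size lam_gt)%N = n.+1.
  have := size_char_poly G; rewrite charG size_prod_XsubC => -[<-].
  by rewrite !size_filter -(count_predC (fun r => r <= c)).
have := rank_Wle_Wgt.
by move: (\rank Wle) (\rank Wgt) (size lam_le) (size lam_gt) => a b u v; lia.
Qed.

End Threshold.

Lemma rayleigh_le_subspace (c : R) : exists2 W : 'M_n.+1,
  (count (fun r => r <= c)%R lam <= \rank W)%N &
  forall x, (x <= W)%MS -> '[x *m G, x] <= c * '[x, x].
Proof.
exists (kermxpoly G (poly_of_roots [seq r <- lam | r <= c])).
  by rewrite rank_Wle size_filter.
exact: rayleigh_Wle.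
Qed.

Lemma rank_rayleigh_le (c : R) m (U : 'M_(m, n.+1)) :
  (forall x, (x <= U)%MS -> '[x *m G, x] <= c * '[x, x]) ->
  (\rank U <= count (fun r => r <= c)%R lam)%N.
Proof.
move=> Uc; set Wgt := kermxpoly G (poly_of_roots [seq r <- lam | ~~ (r <= c)]).
have cap0 : (U :&: Wgt)%MS = 0.
  apply/eqP/rowV0P => x; rewrite sub_capmx => /andP[xU xW]; apply/eqP.
  by apply: contraTT (Uc x xU) => x0; rewrite -ltNge; apply: rayleigh_Wgt.
have := mxrank_sum_cap U Wgt; rewrite cap0 mxrank0 addn0.
have := rank_leq_col (U + Wgt)%MS; have := rank_Wle_Wgt c; rewrite rank_Wle size_filter.
by move: (\rank (U + Wgt)%MS) (\rank U) (\rank Wgt) (count _ _) => a b u v; lia.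
Qed.

End SelfAdjoint.

Lemma sorted_nth_le_count (R : realDomainType) (s : seq R) c k :
  sorted <=%R s -> (k < size s)%N ->
  (nth 0 s k <= c) = (k < count (fun r => r <= c)%R s)%N.
Proof.
move=> s_sorted ks.
have nth_mono i j : (i <= j)%N -> (j < size s)%N -> nth 0 s i <= nth 0 s j.
  move=> ij js; apply: (sorted_leq_nth le_trans lexx) => //.
  by rewrite inE (leq_ltn_trans ij js).
apply/idP/idP => [skc|].
  rewrite -(cat_take_drop k.+1 s) count_cat.
  have : all (fun r => r <= c) (take k.+1 s).
    apply/(all_nthP 0) => j; rewrite size_takel // => jk.
    by rewrite nth_take //; apply: le_trans skc; apply: nth_mono.
  by rewrite all_count => /eqP ->; rewrite size_takel //; lia.
apply: contraLR; rewrite -ltNge -leqNgt => cs.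
rewrite -(cat_take_drop k s) count_cat.
have -> : count (fun r => r <= c) (drop k s) = 0%N.
  apply/eqP; rewrite -leqn0 leqNgt -has_count; apply/hasPn => r.
  move=> /(nthP 0) [j js <-]; rewrite nth_drop -ltNge; apply: lt_le_trans cs _.
  rewrite size_drop in js; apply: nth_mono; [exact: leq_addr | by rewrite -ltn_subRL].
by rewrite addn0 (leq_trans (count_size _ _)) // size_take ks.
Qed.

Lemma size_roots_char_poly (R : fieldType) n (G : 'M[R]_n) s :
  char_poly G = poly_of_roots s -> size s = n.
Proof. by move=> Gs; have := size_char_poly G; rewrite Gs size_prod_XsubC => -[]. Qed.

Lemma selfadjoint_roots_ge0 (R : realFieldType) N (D G : 'M[R]_N) (lam : seq R) :
  selfadjoint D G -> char_poly G = poly_of_roots lam ->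
  (forall x, 0 <= bform D (x *m G) x) -> {in lam, forall r, 0 <= r}.
Proof.
move=> [_ D_pos _] charG form_ge0 r rlam.
have : root (char_poly G) r by rewrite charG root_prod_XsubC.
rewrite -eigenvalue_root_char => /eigenvalueP [x xG x0].
have := form_ge0 x; rewrite xG bformZl.
by rewrite pmulr_lge0 // D_pos.
Qed.

Lemma eigen_shift_le (R : realFieldType) N (D1 G1 D2 G2 : 'M[R]_N)
    (lam theta : seq R) m (Z : 'M_(m, N)) d k :
  selfadjoint D1 G1 -> selfadjoint D2 G2 ->
  char_poly G1 = poly_of_roots lam -> char_poly G2 = poly_of_roots theta ->
  sorted <=%R lam -> sorted <=%R theta ->
  (N - d <= \rank Z)%N -> (k + d < N)%N ->
  (forall x, (x <= Z)%MS ->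
     bform D1 (x *m G1) x <= nth 0 lam (k + d) * bform D1 x x ->
     bform D2 (x *m G2) x <= nth 0 lam (k + d) * bform D2 x x) ->
  nth 0 theta k <= nth 0 lam (k + d).
Proof.
case: N => [|N] in D1 G1 D2 G2 Z *; first by move=> *; lia.
move=> GD1 GD2 char1 char2 lam_sorted theta_sorted rankZ kdN Zc.
set c := nth 0 lam (k + d).
have [W rankW Wc] := rayleigh_le_subspace GD1 char1 c.
have lam_c : (k + d < count (fun r => r <= c)%R lam)%N.
  by rewrite -sorted_nth_le_count ?(size_roots_char_poly char1).
have WZc x : (x <= W :&: Z)%MS -> bform D2 (x *m G2) x <= c * bform D2 x x.
  by rewrite sub_capmx => /andP[xW xZ]; apply: Zc => //; apply: Wc.
have := rank_rayleigh_le GD2 char2 WZc.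
have := mxrank_sum_cap W Z; have := rank_leq_col (W + Z)%MS.
rewrite sorted_nth_le_count ?(size_roots_char_poly char2) //; last by lia.
move: lam_c rankW rankZ kdN.
move: (\rank W) (\rank Z) (\rank (W :&: Z)%MS) (\rank (W + Z)%MS) (count _ lam) (count _ theta).
by move=> *; lia.
Qed.

Section Cochains.
Variables (R : realFieldType) (V n : nat) (K H : {set {set 'I_V}}).

Lemma in_faces (L : {set {set 'I_V}}) m F :
  (F \in faces L m) = (F \in L) && (#|F| == m.+1).
Proof. by rewrite inE. Qed.

Lemma enum_val_faces (L : {set {set 'I_V}}) m (j : 'I_#|faces L m|) :
  enum_val j \in L /\ enum_val j != set0.
Proof.
by have := enum_valP j; rewrite in_faces -card_gt0 => /andP[-> /eqP ->].
Qed.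

Definition energy_mx (w : {set 'I_V} -> R) : 'M[R]_#|faces K n| :=
  (cob R K n)^T *m diag_mx (\row_i w (enum_val i)) *m cob R K n.

Lemma energy_mx_sym w : (energy_mx w)^T = energy_mx w.
Proof. by rewrite /energy_mx !trmx_mul trmxK tr_diag_mx mulmxA. Qed.

Lemma bform_energy_mx w x : bform (energy_mx w) x x =
  \sum_i w (enum_val i) * (x *m (cob R K n)^T) 0 i ^+ 2.
Proof.
have -> : bform (energy_mx w) x x =
    bform (diag_mx (\row_i w (enum_val i))) (x *m (cob R K n)^T) (x *m (cob R K n)^T).
  by rewrite /bform /energy_mx trmx_mul trmxK !mulmxA.
by rewrite bform_diag; apply: eq_bigr => i _; rewrite mxE.
Qed.

(* Rows of L^up at faces of weight 0 vanish by definition of the adjoint,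
   whence the second hypothesis. *)
Lemma Lup_tr_diag (w : {set 'I_V} -> R) (d : 'rV_#|faces K n|) :
  (forall k, w (enum_val k) != 0 -> d 0 k = w (enum_val k)) ->
  (forall (k : 'I_#|faces K n|) (i : 'I_#|faces K n.+1|), w (enum_val k) = 0 ->
     w (enum_val i) * sgn R (enum_val k) (enum_val i) = 0) ->
  (Lup K w n)^T *m diag_mx d = energy_mx w.
Proof.
move=> dw wsgn; apply/matrixP => j k; rewrite mul_mx_diag !mxE mulr_suml.
apply: eq_bigr => i _; rewrite mul_mx_diag !mxE.
have [wk0|wk0] := eqVneq (w (enum_val k)) 0.
  by rewrite !mul0r -mulrA wsgn // mulr0.
by rewrite dw //; field.
Qed.

Lemma selfadjoint_Lup_tr (w : {set 'I_V} -> R) (d : 'rV_#|faces K n|) :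
  (forall j, 0 < d 0 j) -> (Lup K w n)^T *m diag_mx d = energy_mx w ->
  selfadjoint (diag_mx d) (Lup K w n)^T.
Proof.
move=> d_gt0 Lw; split; first exact: tr_diag_mx.
  by move=> x; apply: diag_posdef.
by rewrite Lw energy_mx_sym.
Qed.

Definition restr_mx : 'M[R]_(#|faces K n|, #|faces H n|) :=
  \matrix_(j, l) (enum_val j == enum_val l :> {set 'I_V})%:R.

Lemma restr_mx_eq0 (x : 'rV_#|faces K n|) : x *m restr_mx = 0 ->
  forall j, enum_val j \in H -> x 0 j = 0.
Proof.
move=> x0 j jH; have jHn : enum_val j \in faces H n.
  by have := enum_valP j; rewrite !in_faces jH => /andP[_ ->].
have := congr1 (fun y : 'rV_#|faces H n| => y 0 (enum_rank_in jHn (enum_val j))) x0.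
rewrite /= !mxE (bigD1 j) //= !mxE enum_rankK_in // eqxx mulr1 big1 ?addr0 //.
move=> j' j'j; rewrite !mxE enum_rankK_in //.
by case: eqP => [/enum_val_inj e|]; [rewrite e eqxx in j'j | rewrite mulr0].
Qed.

Definition cob_restr_mx : 'M[R]_(#|faces K n|, #|faces H n.+1|) :=
  \matrix_(j, l) sgn R (enum_val j) (enum_val l).

Lemma cob_restr_mx_eq0 (x : 'rV_#|faces K n|) : x *m cob_restr_mx = 0 ->
  forall i : 'I_#|faces K n.+1|, enum_val i \in H -> (x *m (cob R K n)^T) 0 i = 0.
Proof.
move=> x0 i iH; have iHn : enum_val i \in faces H n.+1.
  by have := enum_valP i; rewrite !in_faces iH => /andP[_ ->].
have := congr1 (fun y : 'rV_#|faces H n.+1| => y 0 (enum_rank_in iHn (enum_val i))) x0.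
rewrite /= !mxE => e; rewrite -[RHS]e; apply: eq_bigr => j _.
by rewrite !mxE enum_rankK_in.
Qed.

Hypothesis H_complex : is_complex H.

Lemma sgn_notin F G : G \in H -> F \notin H -> sgn R F G = 0.
Proof.
move=> GH FH; rewrite /sgn; case: ifP => // /andP[FG _].
by have := H_complex GH FG; rewrite (negPf FH).
Qed.

Lemma cob_restr_mxE : cob_restr_mx = restr_mx *m (cob R H n)^T.
Proof.
apply/matrixP => j i; rewrite !mxE; have [iH _] := enum_val_faces i.
have [jH|jH] := boolP (enum_val j \in H); last first.
  rewrite sgn_notin // big1 // => l _; rewrite !mxE.
  have [lH _] := enum_val_faces l.
  by case: eqP => [e|]; [rewrite e lH in jH | rewrite mul0r].
have jHn : enum_val j \in faces H n by have := enum_valP j; rewrite !in_faces jH => /andP[_ ->].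
set l0 := enum_rank_in jHn (enum_val j).
have el0 : enum_val l0 = enum_val j by rewrite enum_rankK_in.
rewrite (bigD1 l0) //= !mxE el0 eqxx mul1r big1 ?addr0 // => l ll0; rewrite !mxE.
case: eqP => [e|]; last by rewrite mul0r.
by move: ll0; rewrite -el0 in e; rewrite (enum_val_inj e) eqxx.
Qed.

Hypothesis H_dim : has_dim H n.+1.

(* H has no (n+2)-faces, so dim H^{n+1}(H) = |S_{n+1}(H)| - rank delta_n^H. *)
Lemma rank_cob_restr_mx :
  (\rank cob_restr_mx <= #|faces H n.+1| - coh_dim R H n.+1)%N.
Proof.
have no_faces : #|faces H n.+2| = 0%N.
  apply/eqP; rewrite cards_eq0; apply/eqP/setP => F; rewrite in_faces inE.
  case FH: (F \in H) => //=; apply/negbTE.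
  by rewrite neq_ltn ltnS H_dim.2.
have rank0 : \rank (cob R H n.+1) = 0%N.
  by apply/eqP; rewrite -leqn0 -[X in (_ <= X)%N]no_faces rank_leq_row.
rewrite /coh_dim cob_restr_mxE rank0 subn0.
have := mxrankM_maxr restr_mx (cob R H n)^T; have := rank_leq_row (cob R H n).
rewrite mxrank_tr; move: (\rank (restr_mx *m _)) (\rank (cob R H n)) => a b; lia.
Qed.

End Cochains.

Section ProperDifference.
Variables (R : realFieldType) (V n : nat) (K H : {set {set 'I_V}}).
Variables (wK wH : {set 'I_V} -> R) (lam theta : seq R).
Hypothesis wK_gt0 : forall F, F \in K -> F != set0 -> 0 < wK F.
Hypothesis H_complex : is_complex H.
Hypothesis H_dim : has_dim H n.+1.
Hypothesis wH_gt0 : forall F, F \in H -> F != set0 -> 0 < wH F.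
Hypothesis wH_le_wK : forall F, F \in H -> F != set0 -> wH F <= wK F.
Let wL F := wK F - (if F \in H then wH F else 0).
Hypothesis wL_support : forall F G : {set 'I_V},
  F \in K -> 0 < wL F -> G \subset F -> G != set0 -> 0 < wL G.
Hypotheses (lam_sorted : sorted <=%R lam) (theta_sorted : sorted <=%R theta).
Hypothesis lam_char : char_poly (Lup K wK n) = poly_of_roots lam.
Hypothesis theta_char : char_poly (Lup K wL n) = poly_of_roots theta.

Lemma wL_ge0 F : F \in K -> F != set0 -> 0 <= wL F.
Proof.
move=> FK F0; rewrite /wL; case: ifP => FH; last by rewrite subr0 ltW ?wK_gt0.
by rewrite subr_ge0 wH_le_wK.
Qed.

Lemma wL_le_wK F : F \in K -> F != set0 -> wL F <= wK F.
Proof.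
move=> FK F0; rewrite /wL; case: ifP => FH; last by rewrite subr0.
by rewrite gerBl ltW ?wH_gt0.
Qed.

Let dK := \row_(j < #|faces K n|) wK (enum_val j).
(* Where wL vanishes, L^up has a zero row and any positive weight will do. *)
Let dL := \row_(j < #|faces K n|)
  (if wL (enum_val j) == 0 then wK (enum_val j) else wL (enum_val j)).

Lemma LupK_tr_diag : (Lup K wK n)^T *m diag_mx dK = energy_mx n K wK.
Proof.
apply: Lup_tr_diag => [k _|k i wk0]; first by rewrite mxE.
have [kK k0] := enum_val_faces k.
by have := wK_gt0 kK k0; rewrite wk0 ltxx.
Qed.

Lemma LupL_tr_diag : (Lup K wL n)^T *m diag_mx dL = energy_mx n K wL.
Proof.
apply: Lup_tr_diag => [k wk0|k i wk0]; first by rewrite mxE (negPf wk0).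
have [->|wi0] := eqVneq (wL (enum_val i)) 0; first by rewrite mul0r.
rewrite /sgn; case: ifP => [/andP[ki _]|]; last by rewrite mulr0.
have [iK i0] := enum_val_faces i; have [_ k0] := enum_val_faces k.
have wi_gt0 : 0 < wL (enum_val i) by rewrite lt_def wi0 wL_ge0.
by have := wL_support iK wi_gt0 ki k0; rewrite wk0 ltxx.
Qed.

Lemma selfadjoint_LupK : selfadjoint (diag_mx dK) (Lup K wK n)^T.
Proof.
apply: selfadjoint_Lup_tr LupK_tr_diag => j; rewrite mxE.
by have [jK j0] := enum_val_faces j; apply: wK_gt0.
Qed.

Lemma selfadjoint_LupL : selfadjoint (diag_mx dL) (Lup K wL n)^T.
Proof.
apply: selfadjoint_Lup_tr LupL_tr_diag => j; rewrite mxE.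
have [jK j0] := enum_val_faces j; case: eqP => [_|wj0]; first exact: wK_gt0.
by rewrite lt_def wL_ge0 ?andbT //; apply/eqP.
Qed.

Lemma energyK x : bform (diag_mx dK) (x *m (Lup K wK n)^T) x =
  \sum_i wK (enum_val i) * (x *m (cob R K n)^T) 0 i ^+ 2.
Proof. by rewrite bform_mulmx LupK_tr_diag bform_energy_mx. Qed.

Lemma energyL x : bform (diag_mx dL) (x *m (Lup K wL n)^T) x =
  \sum_i wL (enum_val i) * (x *m (cob R K n)^T) 0 i ^+ 2.
Proof. by rewrite bform_mulmx LupL_tr_diag bform_energy_mx. Qed.

Lemma energyL_le_energyK x : bform (diag_mx dL) (x *m (Lup K wL n)^T) x <=
  bform (diag_mx dK) (x *m (Lup K wK n)^T) x.
Proof.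
rewrite energyL energyK; apply: ler_sum => i _; rewrite ler_wpM2r ?sqr_ge0 //.
by have [iK i0] := enum_val_faces i; apply: wL_le_wK.
Qed.

Lemma energyL_eq_energyK x : x *m cob_restr_mx R n K H = 0 ->
  bform (diag_mx dL) (x *m (Lup K wL n)^T) x = bform (diag_mx dK) (x *m (Lup K wK n)^T) x.
Proof.
move=> /cob_restr_mx_eq0 x0; rewrite energyL energyK; apply: eq_bigr => i _.
have [iH|iH] := boolP (enum_val i \in H); first by rewrite x0 // expr0n !mulr0.
by rewrite /wL (negPf iH) subr0.
Qed.

Lemma normL_le_normK x : bform (diag_mx dL) x x <= bform (diag_mx dK) x x.
Proof.
rewrite !bform_diag; apply: ler_sum => j _; rewrite !mxE ler_wpM2r ?sqr_ge0 //.
by have [jK j0] := enum_val_faces j; case: eqP => // _; apply: wL_le_wK.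
Qed.

Lemma normL_eq_normK x : x *m restr_mx R n K H = 0 ->
  bform (diag_mx dL) x x = bform (diag_mx dK) x x.
Proof.
move=> /restr_mx_eq0 x0; rewrite !bform_diag; apply: eq_bigr => j _; rewrite !mxE.
have [jH|jH] := boolP (enum_val j \in H); first by rewrite x0 // expr0n !mulr0.
by rewrite /wL (negPf jH) subr0; case: eqP.
Qed.

Lemma theta_ge0 : {in theta, forall r, 0 <= r}.
Proof.
apply: selfadjoint_roots_ge0 selfadjoint_LupL _ _ => [|x]; first by rewrite char_poly_tr.
rewrite energyL; apply: sumr_ge0 => i _; rewrite mulr_ge0 ?sqr_ge0 //.
by have [iK i0] := enum_val_faces i; apply: wL_ge0.
Qed.

Lemma Lup_diff_upper k : (1 <= k <= #|faces K n| - #|faces H n|)%N ->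
  ev theta k <= ev lam (k + #|faces H n|).
Proof.
case: k => [//|k] /andP[_ kN]; rewrite /ev addSn.
apply: (eigen_shift_le (Z := kermx (restr_mx R n K H))) selfadjoint_LupK
  selfadjoint_LupL _ _ lam_sorted theta_sorted _ _ _.
- by rewrite char_poly_tr.
- by rewrite char_poly_tr.
- by rewrite mxrank_ker leq_sub2l // rank_leq_col.
- by lia.
move=> x; rewrite sub_kermx => /eqP /normL_eq_normK normLK xK.
by rewrite normLK (le_trans (energyL_le_energyK x)).
Qed.

Lemma Lup_diff_lower k : (1 <= k <= #|faces K n|)%N ->
  ev lam (k - (#|faces H n.+1| - coh_dim R H n.+1)) <= ev theta k.
Proof.
set DW := (#|faces H n.+1| - _)%N; case: k => [//|k] /andP[_ kN].
have theta_k_ge0 : 0 <= nth 0 theta k.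
  apply/theta_ge0/mem_nth.
  by rewrite (size_roots_char_poly theta_char).
have [kDW|DWk] := leqP k.+1 DW; first by rewrite /ev (eqP kDW).
rewrite subSn // /ev.
have := eigen_shift_le (Z := kermx (cob_restr_mx R n K H)) (d := DW) (k := k - DW)
  selfadjoint_LupL selfadjoint_LupK.
rewrite subnK //; apply => //.
- by rewrite char_poly_tr.
- by rewrite char_poly_tr.
- by rewrite mxrank_ker leq_sub2l // rank_cob_restr_mx.
move=> x; rewrite sub_kermx => /eqP /energyL_eq_energyK <- xL.
by rewrite (le_trans xL) // ler_wpM2l // normL_le_normK.
Qed.

End ProperDifference.

Theorem theorem1p1 (R : realType) (V n : nat) (K H : {set {set 'I_V}})
  (wK wH : {set 'I_V} -> R) (lam theta : seq R) :
  is_complex K -> has_dim K n.+1 ->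
  (forall F, F \in K -> F != set0 -> 0 < wK F) ->
  is_complex H -> has_dim H n.+1 ->
  (forall F, F \in H -> F != set0 -> 0 < wH F) ->
  H \subset K -> (forall F, F \in H -> F != set0 -> wH F <= wK F) ->
  let wL := fun F => wK F - (if F \in H then wH F else 0) in
  (forall F G : {set 'I_V}, F \in K -> 0 < wL F -> G \subset F -> G != set0 -> 0 < wL G) ->
  sorted <=%R lam -> char_poly (Lup K wK n) = \prod_(x <- lam) ('X - x%:P) ->
  sorted <=%R theta -> char_poly (Lup K wL n) = \prod_(x <- theta) ('X - x%:P) ->
  let N := #|faces K n| in
  let DH := #|faces H n| in
  let DW := (#|faces H n.+1| - coh_dim R H n.+1)%N in
  (forall k, (1 <= k <= N - DH)%N -> ev theta k <= ev lam (k + DH)) /\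
  (forall k, (1 <= k <= N)%N -> ev lam (k - DW) <= ev theta k).
Proof.
move=> _ _ wK_gt0 H_complex H_dim wH_gt0 _ wH_le_wK wL wL_support
  lam_sorted lam_char theta_sorted theta_char N DH DW.
split.
- exact: Lup_diff_upper wK_gt0 wH_gt0 wH_le_wK wL_support
    lam_sorted theta_sorted lam_char theta_char.
- exact: Lup_diff_lower wK_gt0 H_complex H_dim wH_gt0 wH_le_wK wL_support
    lam_sorted theta_sorted lam_char theta_char.
Qed.
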